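(* Let $\mathbb{X},\mathbb{Y}$ be real Banach spaces of dimension greater than $1$. Then the pair $(\mathbb{X},\mathbb{Y})$ has the strong Bishop-Phelps-Bollobás property (sBPBp) if and only if for every $\epsilon>0$ and every nonzero $T\in\mathbb{L}(\mathbb{X},\mathbb{Y})$ there exists $\delta=\delta(\epsilon,T)$ with $0<\delta<\|T\|$ such that \[M_T(\delta)\subseteq\bigcup_{x\in M_T}\big(B(x,\epsilon)\cap S_{\mathbb{X}}\big).\]
   Context: The pair $(\mathbb{X},\mathbb{Y})$ has sBPBp if for every $\epsilon>0$ and every $T\in\mathbb{L}(\mathbb{X},\mathbb{Y})$ with $\|T\|=1$ there exists $\eta(\epsilon,T)>0$ such that whenever $x_0\in S_{\mathbb{X}}$ satisfies $\|Tx_0\|>1-\eta(\epsilon,T)$, there exists $x_1\in S_{\mathbb{X}}$ with $\|Tx_1\|=1$ and $\|x_1-x_0\|<\epsilon$. Here $M_T=\{x\in S_{\mathbb{X}}:\|Tx\|=\|T\|\}$, and for nonzero $T$ and $0<\delta<\|T\|$, $M_T(\delta)=\{x\in S_{\mathbb{X}}:\|Tx\|>\|T\|-\delta\}$; $B(x,r)$ is the open ball of centre $x$ and radius $r$. *)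

From HB Require Import structures.
From mathcomp Require Import all_boot all_order all_algebra.
From mathcomp Require Import all_classical all_reals all_analysis.
Set Implicit Arguments. Unset Strict Implicit. Unset Printing Implicit Defensive.
Import Order.TTheory GRing.Theory Num.Theory.
Import numFieldNormedType.Exports.
Local Open Scope classical_set_scope.
Local Open Scope ring_scope.

Section BPB.
Variables (R : realType) (X Y : normedModType R).

Definition sphere : set X := [set x | `|x| = 1].

Definition opnorm (T : X -> Y) : R := sup [set `|T x| | x in [set x : X | `|x| <= 1]].

Definition bounded_op (T : {linear X -> Y}) : Prop := continuous T.

Definition MT (T : X -> Y) : set X := [set x | `|x| = 1 /\ `|T x| = opnorm T].

Definition MTd (T : X -> Y) (d : R) : set X :=
  [set x | `|x| = 1 /\ opnorm T - d < `|T x|].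

Definition sBPBp : Prop :=
  forall (e : R), 0 < e ->
  forall T : {linear X -> Y}, bounded_op T -> opnorm T = 1 ->
  exists eta : R, 0 < eta /\
    forall x0 : X, `|x0| = 1 -> 1 - eta < `|T x0| ->
      exists x1 : X, `|x1| = 1 /\ `|T x1| = 1 /\ `|x1 - x0| < e.

End BPB.

Definition dim_gt1 (R : realType) (X : normedModType R) : Prop :=
  exists u v : X, forall a b : R, a *: u + b *: v = 0 -> a = 0 /\ b = 0.

From HB Require Import structures.
From mathcomp Require Import all_boot all_order all_algebra.
From mathcomp Require Import all_classical all_reals all_analysis.
Import Order.TTheory GRing.Theory Num.Theory.
Import numFieldNormedType.Exports.
Local Open Scope classical_set_scope.
Local Open Scope ring_scope.

Set Implicit Arguments.
Unset Strict Implicit.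

(* [M_T] and [M_T(delta)] are invariant under [T |-> c T], [delta |-> c delta]
   for [c > 0], so everything reduces to operators of norm one.  For those,
   [M_T(eta)] lying in the [e]-neighbourhood of [M_T] within the sphere is
   literally the sBPBp conclusion with constant [eta]; the only extra step is
   to shrink [eta] below [1], so that [delta < ||T||]. *)

Section OperatorNorm.
Variables (R : realType) (X Y : normedModType R).
Implicit Types (f : X -> Y) (T : {linear X -> Y}).

Lemma opnorm_le_bound f (b : R) :
  (forall x, `|x| <= 1 -> `|f x| <= b) -> opnorm f <= b.
Proof.
move=> fb; apply: ge_sup; first by exists `|f 0|, 0; rewrite //= normr0.
by move=> _ [x /= x1 <-]; exact: fb.
Qed.

Lemma norm_le_opnorm T x : bounded_op T -> `|x| <= 1 -> `|T x| <= opnorm T.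
Proof.
move=> /linear_bounded_continuous /linear_boundedP [M [_ TM]] x1.
have {}TM y : `|T y| <= (`|M| + 1) * `|y|.
  by apply: TM; rewrite (le_lt_trans (ler_norm M)) ?ltrDl.
apply: ub_le_sup; last by exists x.
exists (`|M| + 1) => _ [y /= y1 <-].
by rewrite (le_trans (TM y)) // ler_piMr ?addr_ge0.
Qed.

Lemma opnorm_gt0 T : bounded_op T -> (T : X -> Y) != (fun=> 0) -> 0 < opnorm T.
Proof.
move=> Tb /eqP T0.
have [x Tx0] : exists x, T x != 0.
  apply/not_existsP => Tx; apply/T0/funext => x.
  by apply/eqP/negPn/negP; exact: Tx.
have nx : 0 < `|x| by rewrite normr_gt0; apply: contraNneq Tx0 => ->; rewrite linear0.
apply: (lt_le_trans _ (@norm_le_opnorm _ (`|x|^-1 *: x) Tb _)).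
  by rewrite linearZ /= normrZ ger0_norm ?invr_ge0 // pmulr_rgt0 ?invr_gt0 // normr_gt0.
by rewrite normrZ ger0_norm ?invr_ge0 // mulVf ?gt_eqF.
Qed.

Variables (c : R) (T : {linear X -> Y}).
Hypotheses (c_gt0 : 0 < c) (Tb : bounded_op T).

Let normZT x : `|(c \*: T) x| = c * `|T x|.
Proof. by rewrite normrZ gtr0_norm. Qed.

Lemma bounded_opZ : bounded_op (c \*: T).
Proof. by move=> x; apply: continuousZ; [exact: cst_continuous | exact: Tb]. Qed.

Lemma opnormZ : opnorm (c \*: T) = c * opnorm T.
Proof.
apply/le_anti/andP; split.
  by apply: opnorm_le_bound => x x1; rewrite normZT ler_pM2l // norm_le_opnorm.
rewrite -ler_pdivlMl //; apply: opnorm_le_bound => x x1.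
by rewrite ler_pdivlMl // -normZT; exact: norm_le_opnorm bounded_opZ x1.
Qed.

Lemma MTZ : MT (c \*: T) = MT T.
Proof.
apply/seteqP; split => x [x1 Tx]; split => //; last by rewrite normZT opnormZ Tx.
by move: Tx; rewrite normZT opnormZ => /mulfI; apply; rewrite gt_eqF.
Qed.

Lemma MTdZ (d : R) : MTd (c \*: T) (c * d) = MTd T d.
Proof. by rewrite /MTd opnormZ -mulrBr; under eq_fun do rewrite normZT ltr_pM2l //. Qed.

End OperatorNorm.

Section StrongBPB.
Variables (R : realType) (X Y : normedModType R).

Local Notation cover f e := (\bigcup_(x in MT f) (ball x e `&` @sphere R X)).

Lemma MTd_le (f : X -> Y) (d1 d2 : R) : d1 <= d2 -> MTd f d1 `<=` MTd f d2.
Proof. by move=> d12 x [x1 fx]; split => //; rewrite (le_lt_trans _ fx) // lerB. Qed.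

Lemma MTd_sub_cover_opnorm1 (f : X -> Y) (e eta : R) : opnorm f = 1 ->
  MTd f eta `<=` cover f e <->
  (forall x0, `|x0| = 1 -> 1 - eta < `|f x0| ->
     exists x1, `|x1| = 1 /\ `|f x1| = 1 /\ `|x1 - x0| < e).
Proof.
rewrite /MTd /MT -ball_normE => ->; split.
  move=> cov x0 x01 fx0; have [x1 [x11 fx1] [x0x1 _]] := cov x0 (conj x01 fx0).
  by exists x1.
by move=> near1 x0 [x01 fx0]; have [x1 [x11 [fx1 x0x1]]] := near1 x0 x01 fx0; exists x1.
Qed.

Lemma sBPBp_MTd_sub_cover : sBPBp X Y ->
  forall e : R, 0 < e ->
  forall T : {linear X -> Y}, bounded_op T -> (T : X -> Y) != (fun=> 0) ->
  exists d : R, 0 < d /\ d < opnorm T /\ MTd T d `<=` cover T e.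
Proof.
move=> BPB e e_gt0 T Tb T0.
have c_gt0 : 0 < opnorm T := opnorm_gt0 Tb T0.
set c := opnorm T in c_gt0 *; have ci_gt0 : 0 < c^-1 by rewrite invr_gt0.
have S1 : opnorm (c^-1 \*: T) = 1 by rewrite opnormZ // mulVf ?gt_eqF.
have [eta [eta_gt0 /(MTd_sub_cover_opnorm1 _ _ S1) Scover]] :=
  BPB e e_gt0 _ (bounded_opZ (c := c^-1) Tb) S1.
pose m := Num.min eta (1 / 2).
have m_gt0 : 0 < m by rewrite lt_min eta_gt0 divr_gt0.
exists (c * m); split; first exact: mulr_gt0.
split; first by rewrite gtr_pMr // gt_min ltr_pdivrMr // mul1r ltr1n orbT.
rewrite -(MTZ ci_gt0 Tb) -(MTdZ ci_gt0 Tb) mulKf ?gt_eqF //.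
by apply: subset_trans Scover; apply: MTd_le; rewrite ge_min lexx.
Qed.

Lemma MTd_sub_cover_sBPBp :
  (forall e : R, 0 < e ->
   forall T : {linear X -> Y}, bounded_op T -> (T : X -> Y) != (fun=> 0) ->
   exists d : R, 0 < d /\ d < opnorm T /\ MTd T d `<=` cover T e) ->
  sBPBp X Y.
Proof.
move=> covering e e_gt0 T Tb T1.
have T0 : (T : X -> Y) != (fun=> 0).
  apply/eqP => T0; suff : opnorm T <= 0 by rewrite T1 ler10.
  by apply: opnorm_le_bound => x _; rewrite T0 normr0.
have [d [d_gt0 [_ Tcover]]] := covering e e_gt0 T Tb T0.
by exists d; split => //; apply/MTd_sub_cover_opnorm1.
Qed.

End StrongBPB.

Theorem theorem2p4 (R : realType) (X Y : completeNormedModType R) :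
  dim_gt1 X -> dim_gt1 Y ->
  (sBPBp X Y <->
   forall (e : R), 0 < e ->
   forall T : {linear X -> Y}, bounded_op T -> (T : X -> Y) != (fun=> 0) ->
   exists d : R, 0 < d /\ d < opnorm T /\
     MTd T d `<=` \bigcup_(x in MT T) (ball x e `&` @sphere R X)).
Proof.
move=> _ _; split; [exact: sBPBp_MTd_sub_cover | exact: MTd_sub_cover_sBPBp].
Qed.
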